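(* Let $P,R\in\mathrm{Sym}(n,\mathbb{R})$ and $Q\in\mathrm{Mat}(n,\mathbb{R})$ with $P$ invertible, and let $B=\begin{bmatrix}P^{-1}&-P^{-1}Q\\-Q^TP^{-1}&Q^TP^{-1}Q-R\end{bmatrix}$, $J=\begin{bmatrix}0&-I_n\\ I_n&0\end{bmatrix}$. Then $JB$ is hyperbolic if and only if $\det\big(a^2P+ia(Q^T-Q)+R\big)\neq0$ for all $a\in\mathbb{R}$.
   Context: A real matrix is hyperbolic if it has no eigenvalue on the imaginary axis. *)

From HB Require Import structures.
From mathcomp Require Import all_boot all_order all_algebra.
From mathcomp Require Import reals complex.
Set Implicit Arguments. Unset Strict Implicit. Unset Printing Implicit Defensive.
Import Order.TTheory GRing.Theory Num.Theory.
Local Open Scope ring_scope.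
Local Open Scope complex_scope.

Definition cmx (R : realType) m n (A : 'M[R]_(m, n)) : 'M[R[i]]_(m, n) :=
  map_mx (fun x => x%:C) A.

Definition hyperbolic (R : realType) n (M : 'M[R]_n) : Prop :=
  forall b : R, ~~ eigenvalue (cmx M) (Complex 0 b).

Definition Jmx (R : realType) n : 'M[R]_(n + n) :=
  block_mx 0 (- 1%:M) 1%:M 0.

Definition Bmx (R : realType) n (P Q S : 'M[R]_n) : 'M[R]_(n + n) :=
  block_mx (invmx P) (- (invmx P *m Q))
           (- (Q^T *m invmx P)) (Q^T *m invmx P *m Q - S).

(* A row vector (x, y) is an eigenvector of J B for the eigenvalue l iff
   y = l x P - x Q^T and x (- l^2 P + l (Q^T - Q) + S) = 0, so the eigenvalues
   of J B are the roots of det (- l^2 P + l (Q^T - Q) + S).  At l = b i this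
   determinant is det (b^2 P + i b (Q^T - Q) + S). *)
From HB Require Import structures.
From mathcomp Require Import all_boot all_order all_algebra.
From mathcomp Require Import reals complex.
Import Order.TTheory GRing.Theory Num.Theory.
Local Open Scope ring_scope.
Local Open Scope complex_scope.

Section BlockEigenvalue.

Context {F : fieldType} {n : nat} (p q s : 'M[F]_n).
Hypothesis p_unit : p \in unitmx.

Local Notation p' := (invmx p).
Local Notation H := (block_mx (q^T *m p') (s - q^T *m p' *m q) p' (- (p' *m q))).
Local Notation quad l := (- l ^+ 2 *: p + l *: (q^T - q) + s).

Lemma row_mx_eigenvectorP (x y : 'rV_n) (l : F) :
  row_mx x y *m H = l *: row_mx x y <->
  y = l *: (x *m p) - x *m q^T /\ x *m quad l = 0.
Proof.
rewrite mul_row_block scale_row_mx.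
have first_col :
    x *m (q^T *m p') + y *m p' = l *: x <-> y = l *: (x *m p) - x *m q^T.
  split=> [E1 | ->].
  - have := congr1 (mulmx^~ p) E1.
    rewrite /= mulmxDl -!mulmxA (mulVmx p_unit) !mulmx1 -scalemxAl => <-.
    by rewrite addrC addKr.
  - rewrite mulmxBl -scalemxAl -(mulmxA x p) (mulmxV p_unit) mulmx1.
    by rewrite mulmxA addrC subrK.
have second_col : y = l *: (x *m p) - x *m q^T ->
    (x *m (s - q^T *m p' *m q) + y *m - (p' *m q) = l *: y <-> x *m quad l = 0).
  move=> Ey.
  have -> : y *m - (p' *m q) = x *m (q^T *m p' *m q) - l *: (x *m q).
    rewrite Ey mulmxN mulmxBl -scalemxAl !mulmxA -(mulmxA x p) (mulmxV p_unit).
    by rewrite mulmx1 -mulmxA opprB.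
  have quad_eq : x *m quad l = x *m s - l *: (x *m q) - l *: y.
    rewrite Ey !mulmxDr -!scalemxAr mulmxBr !scalerBr scalerA -expr2 scaleNr.
    rewrite opprB addrC addrCA addrA (addrC (- _)) [LHS]addrACA [RHS]addrACA.
    by rewrite (addrC (- _)).
  rewrite mulmxBr addrA subrK quad_eq.
  by split=> [-> | /eqP]; [rewrite subrr | rewrite subr_eq0 => /eqP].
split=> [/eq_row_mx[/first_col Ey /(second_col Ey) Ex] | [Ey Ex]] //.
by congr row_mx; [apply/first_col | apply/(second_col Ey)].
Qed.

Lemma eigenvalue_block_mx_det (l : F) :
  eigenvalue H l = (\det (quad l) == 0).
Proof.
apply/eigenvalueP/det0P => [[v Ev v0] | [x x0 Ex]].
- move: Ev; rewrite -(hsubmxK v) => /row_mx_eigenvectorP[Ey Ex].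
  exists (lsubmx v) => //; apply: contraNneq v0 => x0.
  by rewrite -(hsubmxK v) Ey x0 mul0mx scaler0 mul0mx subrr row_mx0.
- exists (row_mx x (l *: (x *m p) - x *m q^T)); first exact/row_mx_eigenvectorP.
  by rewrite row_mx_eq0 negb_and x0.
Qed.

End BlockEigenvalue.

Lemma sqr_pure_imaginary (R : realType) (b : R) :
  (Complex 0 b) ^+ 2 = - (b ^+ 2)%:C.
Proof.
rewrite expr2; apply/eqP.
by rewrite eq_complex /= !(mul0r, mulr0) sub0r add0r oppr0 !eqxx.
Qed.

Lemma mulmx_Jmx_Bmx (R : realType) n (P Q S : 'M[R]_n) :
  Jmx R n *m Bmx P Q S =
  block_mx (Q^T *m invmx P) (S - Q^T *m invmx P *m Q)
           (invmx P) (- (invmx P *m Q)).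
Proof.
rewrite /Jmx /Bmx mulmx_block !mul0mx !add0r !addr0 !mul1mx !mulNmx !mul1mx.
by rewrite !opprK opprB.
Qed.

Lemma eigenvalue_cmx_Jmx_Bmx (R : realType) n (P Q S : 'M[R]_n) (l : R[i]) :
  P \in unitmx ->
  eigenvalue (cmx (Jmx R n *m Bmx P Q S)) l =
  (\det (- l ^+ 2 *: cmx P + l *: cmx (Q^T - Q) + cmx S) == 0).
Proof.
move=> P_unit; have cP_unit : cmx P \in unitmx by rewrite map_unitmx.
rewrite mulmx_Jmx_Bmx /cmx map_block_mx !map_mxN map_mxB !map_mxM -!map_trmx.
rewrite map_invmx.
by rewrite (eigenvalue_block_mx_det _ _ _ cP_unit) map_mxB map_trmx.
Qed.

Theorem lemma2p1 (R : realType) (n : nat) (P Q S : 'M[R]_n) :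
  P^T = P -> S^T = S -> P \in unitmx ->
  (hyperbolic (Jmx R n *m Bmx P Q S) <->
   forall a : R,
     \det (cmx (a ^+ 2 *: P) + (Complex 0 a) *: cmx (Q^T - Q) + cmx S) != 0).
Proof.
move=> _ _ P_unit.
have eigenvalue_det (b : R) :
    eigenvalue (cmx (Jmx R n *m Bmx P Q S)) (Complex 0 b) =
    (\det (cmx (b ^+ 2 *: P) + Complex 0 b *: cmx (Q^T - Q) + cmx S) == 0).
  by rewrite eigenvalue_cmx_Jmx_Bmx // sqr_pure_imaginary opprK /cmx map_mxZ.
by split=> hyp b; [rewrite -eigenvalue_det | rewrite eigenvalue_det]; apply: hyp.
Qed.
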